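(* Let $L=E[C_1,\dots,C_n]$ be a congruence normal lattice. If $L$ is shellable, then for every $i\in[n]$ the convex subset $C_i$ intersects the spine of $E[C_1,\dots,C_{i-1}]$.
   Context: All lattices are finite. For a convex subset $C$ of a lattice $L$ (convex: $x,y\in C\Rightarrow[x,y]\subseteq C$), let $I_L(C)=\{y\in L\mid\exists x\in C,\ y\le x\}$, and the doubling $L[C]$ is the subposet of $L\times\{0<1\}$ on $\big(I_L(C)\times\{0\}\big)\sqcup\big(((L\setminus I_L(C))\cup C)\times\{1\}\big)$. $E[\,]$ is the one-element lattice and $E[C_1,\dots,C_{i+1}]:=E[C_1,\dots,C_i][C_{i+1}]$ with $C_{i+1}$ a nonempty convex subset of $E[C_1,\dots,C_i]$. The spine of a poset is the set of elements lying on some chain of maximum length. The order complex $\Delta(L)$ is the simplicial complex on $L$ whose faces are the chains of $L$; its facets are the maximal chains. $L$ is shellable if $\Delta(L)$ is shellable, i.e. its facets admit a linear order $F_1,\dots,F_k$ such that for each $1\le j<k$, the complex $\big(\bigcup_{i\le j}\langle F_i\rangle\big)\cap\langle F_{j+1}\rangle$ is pure of dimension $|F_{j+1}|-2$, where $\langle F\rangle$ is the set of all subsets of $F$. *)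

From mathcomp Require Import all_boot.
Set Implicit Arguments.
Unset Strict Implicit.
Unset Printing Implicit Defensive.

(** Carrier types of the iterated doublings: E[C_1,...,C_i] is a subposet of
    ((unit * bool) * bool) * ... * bool  (i factors bool), since
    L[C] is by definition a subposet of L x {0<1}. *)
Fixpoint Ty (n : nat) : finType :=
  match n with
  | 0 => unit
  | k.+1 => (Ty k * bool)%type
  end.

Fixpoint leT (n : nat) : rel (Ty n) :=
  match n return rel (Ty n) with
  | 0 => fun _ _ => true
  | k.+1 => fun (x y : (Ty k * bool)%type) => @leT k x.1 y.1 && (x.2 ==> y.2)
  end.

Section Posets.
Variables (T : finType) (le : rel T).

Definition convex (S C : {set T}) : Prop :=
  C \subset S /\
  forall x y z, x \in C -> y \in C -> z \in S -> le x z -> le z y -> z \in C.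

Definition downset (S C : {set T}) : {set T} :=
  [set y in S | [exists x in C, le y x]].

(** The doubling L[C], as a subset of L x {0<1} (carrying the product order). *)
Definition doubling (S C : {set T}) : {set (T * bool)%type} :=
  [set p | if p.2 then (p.1 \in S :\: downset S C) || (p.1 \in C)
           else p.1 \in downset S C].

(** chains of the poset (S, le) = faces of the order complex *)
Definition chain (S A : {set T}) : Prop :=
  A \subset S /\ forall x y, x \in A -> y \in A -> le x y || le y x.

(** maximal chains = facets of the order complex *)
Definition maxchain (S A : {set T}) : Prop :=
  chain S A /\ forall B, chain S B -> A \subset B -> B = A.

Definition maxlen_chain (S A : {set T}) : Prop :=
  chain S A /\ forall B, chain S B -> #|B| <= #|A|.

Definition spine (S : {set T}) (x : T) : Prop :=
  exists A, maxlen_chain S A /\ x \in A.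

(** A simplicial complex K (given as a predicate on faces) is pure of
    dimension d when every facet (inclusion-maximal face) has d+1 vertices;
    here dp1 = d + 1. *)
Definition pure_card (K : {set T} -> Prop) (dp1 : nat) : Prop :=
  forall G, K G -> (forall H, K H -> G \subset H -> H = G) -> #|G| = dp1.

(** Shelling of the order complex Delta(S): a linear order F_1,...,F_k of
    all facets (0-indexed here) such that for 1 <= j < k,
    (U_{i<=j} <F_i>) /\ <F_{j+1}> is pure of dimension |F_{j+1}| - 2. *)
Definition shelling (S : {set T}) (F : seq {set T}) : Prop :=
  uniq F /\ (forall A, A \in F <-> maxchain S A) /\
  forall j, 0 < j < size F ->
    pure_card (fun G => G \subset nth set0 F j /\
                        exists2 i, i < j & G \subset nth set0 F i)
              (#|nth set0 F j| - 1).

Definition shellable (S : {set T}) : Prop := exists F, shelling S F.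

End Posets.

(** E[C_0, ..., C_{n-1}] (0-indexed: C i is doubled in the i-th stage). *)
Fixpoint stage (C : forall i : nat, {set Ty i}) (n : nat) : {set Ty n} :=
  match n return {set Ty n} with
  | 0 => [set: Ty 0]
  | k.+1 => doubling (@leT k) (stage C k) (C k)
  end.

(* Write L_k = E[C_1, ..., C_k] and let p : L_n -> L_(i-1) forget the last
   n - i + 1 doubling coordinates.  The map p sends maximal chains onto maximal
   chains, and every chain of L_(i-1) lifts to a chain of L_n.  Call a maximal
   chain F of L_n long when p(F) has maximum length, and meeting when p(F)
   meets C_i.  In a shelling every facet G = F_j, j > 0, shares all but one
   element with some earlier facet F, and both properties pass from G to F.
   If G is long, p(G :&: F) misses at most one point of p(G); so either p(F)
   is long, or p(F) = p(G :&: F) lies in the chain p(G), and then p(F) = p(G)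
   by maximality.  If G is meeting, the analysis of maximal chains of a
   doubling shows that G has two elements lying over the two copies (c, 0)
   and (c, 1) in L_i of some c in C_i, and F keeps one of them.  Some facet of each kind exists,
   so the first facet of the shelling is both long and meeting, which puts a
   point of C_i on a chain of maximum length of L_(i-1). *)

From mathcomp Require Import all_boot zify.
Set Implicit Arguments. Unset Strict Implicit. Unset Printing Implicit Defensive.

Lemma leT_refl n : reflexive (@leT n).
Proof. by elim: n => [|n IH] x //=; rewrite IH implybb. Qed.

Lemma leT_trans n : transitive (@leT n).
Proof.
elim: n => [|n IH] y x z //= /andP[le_xy1 le_xy2] /andP[le_yz1 le_yz2].
by rewrite (IH _ _ _ le_xy1 le_yz1); move: le_xy2 le_yz2; case: x.2; case: y.2.
Qed.

Section Chains.
Variables (T : finType) (le : rel T).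

Definition chainb (S A : {set T}) :=
  (A \subset S) && [forall x in A, forall y in A, le x y || le y x].

Lemma chainP S A : reflect (chain le S A) (chainb S A).
Proof.
apply: (iffP andP) => -[AS cmp]; split=> //.
  by move=> x y xA yA; move/forall_inP/(_ x xA)/forall_inP: cmp; apply.
by apply/forall_inP => x xA; apply/forall_inP => y yA; apply: cmp.
Qed.

Lemma ex_maxchain_sup S A : chain le S A -> exists2 F, maxchain le S F & A \subset F.
Proof.
move=> /chainP chA.
pose P B := chainb S B && (A \subset B).
have PA : P A by rewrite /P chA subxx.
have [F /andP[chF AF] Fmax] := @arg_maxnP _ A P (fun B => #|B|) PA.
exists F => //; split=> [|B /chainP chB FB]; first exact/chainP.
apply/eqP; rewrite eq_sym eqEcard FB /=.
by apply: Fmax; rewrite /P chB (subset_trans AF FB).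
Qed.

Lemma ex_maxlen_chain S : exists A, maxlen_chain le S A.
Proof.
have ch0 : chainb S set0 by apply/chainP; split=> [|x y]; rewrite ?sub0set ?inE.
have [A chA Amax] := @arg_maxnP _ set0 (chainb S) (fun B => #|B|) ch0.
by exists A; split=> [|B /chainP]; [apply/chainP | apply: Amax].
Qed.

Lemma maxchain_mem (le_refl : reflexive le) S F w : maxchain le S F -> w \in S ->
  {in F, forall u, le u w || le w u} -> w \in F.
Proof.
move=> [[FS chF] Fmax] wS cmp.
have chwF : chain le S (w |: F).
  split=> [|u v /setU1P[->|uF] /setU1P[->|vF]]; rewrite ?le_refl //.
  - by rewrite subUset sub1set wS.
  - by rewrite orbC cmp.
  - exact: cmp.
  - exact: chF.
by rewrite -(Fmax _ chwF (subsetUr _ _)) setU11.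
Qed.

Lemma ex_greatest (le_trans : transitive le) (A : {set T}) : A != set0 ->
  {in A &, forall x y, le x y || le y x} -> exists2 a, a \in A & {in A, forall b, le b a}.
Proof.
case/set0Pn => a0 a0A cmp.
pose below a := #|[set b in A | le b a]|.
have [a aA amax] := @arg_maxnP _ a0 (mem A) below a0A.
exists a => // b bA; apply/negPn/negP => nle_ba.
have le_ab : le a b by move: (cmp a b aA bA); rewrite (negbTE nle_ba) orbF.
have := amax b bA; apply/negP; rewrite -ltnNge; apply: proper_card.
apply/properP; split.
  by apply/subsetP => c; rewrite !inE => /andP[-> le_ca]; apply: le_trans le_ab.
by exists b; rewrite !inE ?bA ?nle_ba // -[le b b]orbb cmp.
Qed.

End Chains.

Lemma ex_least (T : finType) (le : rel T) (le_trans : transitive le) (A : {set T}) :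
  A != set0 -> {in A &, forall x y, le x y || le y x} ->
  exists2 a, a \in A & {in A, forall b, le a b}.
Proof.
move=> A_ne cmp; apply: (@ex_greatest _ (fun x y => le y x)) => //.
  by move=> y x z le_yx le_zy; apply: le_trans le_zy le_yx.
move=> x y xA yA.
by rewrite orbC cmp.
Qed.

Section Shelling.
Variables (T : finType) (le : rel T) (S : {set T}).

Definition adjacency_closed (P : {set T} -> Prop) :=
  forall G F, maxchain le S G -> maxchain le S F -> P G -> #|G :&: F| = #|G| - 1 -> P F.

Lemma meets_adjacency_closed (B : pred T) :
  (forall F, maxchain le S F -> (exists2 x, x \in F & B x) ->
     exists y z, [/\ y != z, y \in F, z \in F, B y & B z]) ->
  adjacency_closed (fun F => exists2 x, x \in F & B x).
Proof.
move=> two G F Gmax _ /(two G Gmax) [y [z [yz yG zG By Bz]]] GF.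
have [yF|yNF] := boolP (y \in F); first by exists y.
have [zF|zNF] := boolP (z \in F); first by exists z.
have GdF : #|G :\: F| = 1.
  by rewrite cardsD GF subKn // card_gt0; apply/set0Pn; exists y.
have yzGdF : [set y; z] \subset G :\: F.
  by apply/subsetP => u /set2P[]->; rewrite in_setD ?yNF ?zNF.
by move: (subset_leq_card yzGdF); rewrite cards2 yz GdF.
Qed.

Variable Fs : seq {set T}.
Hypothesis shellFs : shelling le S Fs.

Lemma shelling_maxchain j : j < size Fs -> maxchain le S (nth set0 Fs j).
Proof. by have [_ [memFs _]] := shellFs; move=> jFs; apply/memFs/mem_nth. Qed.

(* Among the faces [F_j :&: F_i], i < j, one of largest size is a facet of the
   intersection complex, so purity fixes its size. *)
Lemma shelling_adjacent j : 0 < j < size Fs ->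
  exists2 i, i < j & #|nth set0 Fs j :&: nth set0 Fs i| = #|nth set0 Fs j| - 1.
Proof.
move=> jFs; have [_ [_ pure]] := shellFs; have /andP[j_gt0 _] := jFs.
pose common (i : 'I_j) := #|nth set0 Fs j :&: nth set0 Fs i|.
have [i _ imax] := @arg_maxnP _ (Ordinal j_gt0) predT common isT.
exists i => //; apply: (pure j jFs).
  by split; [exact: subsetIl | exists i => //; exact: subsetIr].
move=> H [HFj [i' i'j HFi']] sub; apply/eqP; rewrite eq_sym eqEcard sub /=.
apply: leq_trans (imax (Ordinal i'j) isT).
by apply: subset_leq_card; rewrite subsetI HFj.
Qed.

Lemma shelling_first_facet P : adjacency_closed P ->
  forall F, maxchain le S F -> P F -> P (nth set0 Fs 0).
Proof.
move=> closedP F; have [_ [memFs _]] := shellFs; move=> /memFs FFs.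
rewrite -(nth_index set0 FFs); rewrite -index_mem in FFs.
elim/ltn_ind: (index F Fs) FFs => -[|j] IH jFs Pj //.
have [i ij adj] := @shelling_adjacent j.+1 jFs.
have iFs := ltn_trans ij jFs.
exact: IH ij iFs (closedP _ _ (shelling_maxchain jFs) (shelling_maxchain iFs) Pj adj).
Qed.

End Shelling.

Section Image.
Variables (T U : finType) (le : rel T) (leU : rel U) (S : {set T}) (SU : {set U}).
Variable p : T -> U.
Hypothesis p_chain : forall A, chain le S A -> chain leU SU (p @: A).
Hypothesis p_maxchain : forall F, maxchain le S F -> maxchain leU SU (p @: F).
Hypothesis p_lift : forall B, chain leU SU B -> exists2 A, chain le S A & p @: A = B.

Lemma maxlen_image_adjacency_closed :
  adjacency_closed le S (fun F => maxlen_chain leU SU (p @: F)).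
Proof.
move=> G F Gmax Fmax [_ Gmaxlen] GF.
have [chpF pFmax] := p_maxchain Fmax.
split=> // B chB; apply: leq_trans (Gmaxlen B chB) _.
have pG_le : #|p @: G| <= #|p @: (G :&: F)| + 1.
  rewrite -{1}(setID G F) imsetU; apply: leq_trans (leq_card_setU _ _) _.
  rewrite leq_add2l; apply: leq_trans (leq_imset_card _ _) _.
  by rewrite cardsD GF; lia.
have pGF_sub : p @: (G :&: F) \subset p @: F by apply/imsetS/subsetIr.
have [pGF_eq|pGF_neq] := eqVneq (p @: (G :&: F)) (p @: F).
  have pFG : p @: F \subset p @: G by rewrite -pGF_eq; apply/imsetS/subsetIl.
  by rewrite (pFmax _ (p_chain Gmax.1) pFG).
apply: leq_trans pG_le _; rewrite addn1; apply: proper_card.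
by rewrite properEneq pGF_neq.
Qed.

Lemma ex_maxchain_image_maxlen :
  exists2 F, maxchain le S F & maxlen_chain leU SU (p @: F).
Proof.
have [B [chB Bmax]] := ex_maxlen_chain leU SU.
have [A chA pAB] := p_lift chB.
have [F Fmax AF] := ex_maxchain_sup chA.
exists F => //; split=> [|B' chB']; first exact: p_chain Fmax.1.
by apply: leq_trans (Bmax _ chB') _; rewrite -pAB subset_leq_card ?imsetS.
Qed.

Lemma ex_maxchain_meeting (leU_refl : reflexive leU) (A : {set U}) u :
  u \in A -> u \in SU -> exists2 F, maxchain le S F & exists2 x, x \in F & p x \in A.
Proof.
move=> uA uSU.
have chu : chain leU SU [set u].
  by split=> [|x y /set1P-> /set1P->]; rewrite ?sub1set ?leU_refl.
have [A' chA' pA'u] := p_lift chu.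
have [F Fmax A'F] := ex_maxchain_sup chA'.
have /imsetP[x xF ux] : u \in p @: F.
  by apply: subsetP (imsetS p A'F) _ _; rewrite pA'u set11.
by exists F => //; exists x; rewrite -?ux.
Qed.

End Image.

Section Doubling.
Variables (T : finType) (le : rel T).
Hypotheses (le_refl : reflexive le) (le_trans : transitive le).
Variables (S C : {set T}).
Hypothesis C_convex : convex le S C.

Definition le_doubling : rel (T * bool) := fun u v => le u.1 v.1 && (u.2 ==> v.2).

Local Notation leD := le_doubling.
Local Notation D := (doubling le S C).
Local Notation I := (downset le S C).

Lemma le_doubling_refl : reflexive leD.
Proof. by move=> u; rewrite /le_doubling le_refl implybb. Qed.

Lemma mem_doubling0 x : ((x, false) \in D) = (x \in I).
Proof. by rewrite inE. Qed.

Lemma mem_doubling1 x : ((x, true) \in D) = (x \in S :\: I) || (x \in C).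
Proof. by rewrite inE. Qed.

Lemma downsetP y : reflect (y \in S /\ exists2 c, c \in C & le y c) (y \in I).
Proof.
rewrite inE; apply: (iffP andP) => -[yS yC]; split=> //.
  by case/exists_inP: yC => c; exists c.
by case: yC => c cC le_yc; apply/exists_inP; exists c.
Qed.

Lemma downset_closed x y : x \in S -> le x y -> y \in I -> x \in I.
Proof.
move=> xS le_xy /downsetP[_ [c cC le_yc]]; apply/downsetP; split=> //.
by exists c => //; apply: le_trans le_yc.
Qed.

Lemma C_sub_downset c : c \in C -> c \in I.
Proof.
by move=> cC; apply/downsetP; split; [exact: (subsetP C_convex.1) | exists c].
Qed.

Lemma doubling_fst u : u \in D -> u.1 \in S.
Proof.
case: u => x [] /=; rewrite ?mem_doubling0 ?mem_doubling1; last by case/downsetP.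
by case/orP => [/setDP[]|/(subsetP C_convex.1)].
Qed.

Lemma doubling_chain_fst F u v : chain leD D F -> u \in F -> v \in F ->
  le u.1 v.1 || le v.1 u.1.
Proof.
by move=> [_ chF] uF vF; case/orP: (chF u v uF vF) => /andP[-> _]; rewrite ?orbT.
Qed.

Lemma doubling_fst_chain A : chain leD D A -> chain le S (fst @: A).
Proof.
move=> chA; split=> [|_ _ /imsetP[u uA ->] /imsetP[v vA ->]].
  by apply/subsetP => _ /imsetP[u uA ->]; apply/doubling_fst/(subsetP chA.1).
exact: doubling_chain_fst chA uA vA.
Qed.

(* [x \notin I] is monotone in [x], so [x |-> (x, x \notin I)] preserves the order. *)
Lemma doubling_lift_chain A : chain le S A -> exists2 A', chain leD D A' & fst @: A' = A.
Proof.
move=> [AS chA]; exists [set (x, x \notin I) | x in A]; last first.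
  by rewrite -imset_comp imset_id.
split=> [|_ _ /imsetP[x xA ->] /imsetP[y yA ->]].
  apply/subsetP => _ /imsetP[x xA ->]; rewrite inE /=.
  by case: ifP => [xNI|/negbFE //]; rewrite in_setD xNI (subsetP AS).
have up_closed a b : a \in A -> le a b -> (a \notin I) ==> (b \notin I).
  move=> aA le_ab; apply/implyP; apply: contra => bI.
  exact: downset_closed (subsetP AS _ aA) le_ab bI.
rewrite /le_doubling /=; case/orP: (chA x y xA yA) => [le_xy|le_yx].
  by rewrite le_xy (up_closed x y xA le_xy).
by rewrite le_yx (up_closed y x yA le_yx) orbT.
Qed.

(* Only the points of F in the other copy can fail to be comparable with [(y, b)]. *)
Lemma doubling_comparable (F : {set T * bool}) y b :
  {in F, forall u, le u.1 y || le y u.1} ->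
  (forall x, (x, ~~ b) \in F -> if b then le x y else le y x) ->
  {in F, forall u, leD u (y, b) || leD (y, b) u}.
Proof.
move=> cmp hb [x bx] xF; move: (cmp _ xF) (hb x) => {hb}; rewrite /le_doubling /=.
by case: b bx xF => -[] xF //=; rewrite ?andbT ?andbF ?orbF // => _; apply.
Qed.

(* The copy of [y] is forced unless [y \in C]; then the lower copy works exactly when
   some [(z, false) \in F] lies above [y]. *)
Lemma doubling_lift_point (F : {set T * bool}) y : chain leD D F -> y \in S ->
  {in F, forall u, le u.1 y || le y u.1} ->
  exists2 b, (y, b) \in D & forall x, (x, ~~ b) \in F -> if b then le x y else le y x.
Proof.
move=> chF yS cmp; have FD := subsetP chF.1.
have cmpF x b : (x, b) \in F -> ~~ le y x -> le x y.
  by move=> xF nle_yx; move: (cmp _ xF); rewrite (negbTE nle_yx) orbF.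
have [yI|yNI] := boolP (y \in I); last first.
  exists true => [|x xF]; first by rewrite mem_doubling1 in_setD yNI yS.
  move: yNI; apply: contraNT => nle_xy.
  have le_yx : le y x by move: (cmp _ xF); rewrite (negbTE nle_xy).
  by apply: downset_closed yS le_yx _; rewrite -mem_doubling0 FD.
have [yC|yNC] := boolP (y \in C); last first.
  exists false => [|x xF]; first by rewrite mem_doubling0.
  move: yNC; apply: contraNT => nle_yx; have le_xy := cmpF _ _ xF nle_yx.
  have xS : x \in S by apply: (doubling_fst (FD _ xF)).
  have := FD _ xF; rewrite mem_doubling1 in_setD (downset_closed xS le_xy yI) /= => xC.
  by case/downsetP: yI => _ [c cC le_yc]; apply: C_convex.2 xC cC yS le_xy le_yc.
have [z /andP[zF le_yz]|nabove] := pickP (fun z => ((z, false) \in F) && le y z).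
  exists false => [|x xF /=]; first by rewrite mem_doubling0 C_sub_downset.
  have := chF.2 _ _ xF zF; rewrite /le_doubling /= andbF andbT /= => le_zx.
  exact: le_trans le_yz le_zx.
exists true => [|x xF /=]; first by rewrite mem_doubling1 yC orbT.
by apply: (cmpF _ _ xF); move: (nabove x); rewrite xF /= => ->.
Qed.

Lemma doubling_fst_maxchain F : maxchain leD D F -> maxchain le S (fst @: F).
Proof.
move=> Fmax; split=> [|B [BS chB] FB]; first exact: doubling_fst_chain Fmax.1.
apply/eqP; rewrite eqEsubset FB andbT; apply/subsetP => y yB.
have cmp : {in F, forall u, le u.1 y || le y u.1}.
  by move=> u uF; apply: chB (subsetP FB _ (imset_f _ uF)) yB.
have [b ybD hb] := doubling_lift_point Fmax.1 (subsetP BS _ yB) cmp.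
have ybF := maxchain_mem le_doubling_refl Fmax ybD (doubling_comparable cmp hb).
by rewrite -[y]/((y, b).1) imset_f.
Qed.

Lemma doubling_top F c : maxchain leD D F -> c \in C -> (c, false) \in F ->
  (forall y, y \in C -> (y, false) \in F -> le y c) -> (c, true) \in F.
Proof.
move=> Fmax cC cF top; have FD := subsetP Fmax.1.1.
apply: (maxchain_mem le_doubling_refl Fmax); first by rewrite mem_doubling1 cC orbT.
apply: doubling_comparable.
  by move=> u uF; apply: doubling_chain_fst Fmax.1 uF cF.
move=> x xF /=; have /orP[//|le_cx] := doubling_chain_fst Fmax.1 xF cF.
have /downsetP[xS [c' c'C le_xc']] : x \in I by rewrite -mem_doubling0; apply: FD.
exact: top (C_convex.2 _ _ _ cC c'C xS le_cx le_xc') xF.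
Qed.

Lemma doubling_bottom F c : maxchain leD D F -> c \in C -> (c, true) \in F ->
  (forall y, y \in C -> (y, true) \in F -> le c y) -> (c, false) \in F.
Proof.
move=> Fmax cC cF bottom; have FD := subsetP Fmax.1.1.
apply: (maxchain_mem le_doubling_refl Fmax); first by rewrite mem_doubling0 C_sub_downset.
apply: doubling_comparable.
  by move=> u uF; apply: doubling_chain_fst Fmax.1 uF cF.
move=> x xF /=; have /orP[le_xc|//] := doubling_chain_fst Fmax.1 xF cF.
have xI : x \in I by apply/downsetP; split; [exact: doubling_fst (FD _ xF) | exists c].
have := FD _ xF; rewrite mem_doubling1 in_setD xI /= => xC.
exact: bottom xC xF.
Qed.

Lemma maxchain_doubling_vertical F : maxchain leD D F ->
  (exists2 u, u \in F & u.1 \in C) ->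
  exists c, [/\ c \in C, (c, false) \in F & (c, true) \in F].
Proof.
move=> Fmax [[c0 b0] c0F /= c0C].
pose level b := [set y in C | (y, b) \in F].
have level_chain b : {in level b &, forall x y, le x y || le y x}.
  move=> x y; rewrite !inE => /andP[_ xF] /andP[_ yF].
  exact: doubling_chain_fst Fmax.1 xF yF.
have level0_ne : level false != set0.
  case: b0 c0F => c0F; last by apply/set0Pn; exists c0; rewrite inE c0C.
  have level1_ne : level true != set0 by apply/set0Pn; exists c0; rewrite inE c0C.
  have [c /setIdP[cC cF] cmin] := ex_least le_trans level1_ne (level_chain true).
  apply/set0Pn; exists c; rewrite inE cC /=.
  by apply: (doubling_bottom Fmax cC cF) => y yC yF; apply: (cmin y); rewrite inE yC.
have [c /setIdP[cC cF] cmax] := ex_greatest le_trans level0_ne (level_chain false).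
exists c; split=> //.
by apply: (doubling_top Fmax cC cF) => y yC yF; apply: (cmax y); rewrite inE yC.
Qed.

End Doubling.

Fixpoint trunc (d j : nat) : Ty (d + j) -> Ty j :=
  match d return Ty (d + j) -> Ty j with
  | 0 => id
  | d'.+1 => fun x => @trunc d' j x.1
  end.
Arguments trunc : clear implicits.

Lemma imset_trunc0 j (A : {set Ty (0 + j)}) : trunc 0 j @: A = A.
Proof. exact: imset_id. Qed.

Lemma imset_truncS d j (A : {set Ty (d.+1 + j)}) :
  trunc d.+1 j @: A = trunc d j @: (fst @: (A : {set Ty (d + j) * bool})).
Proof. by rewrite -imset_comp. Qed.

Section Tower.
Variable C : forall i : nat, {set Ty i}.

Lemma trunc_chain d j A :
  (forall e, e < d -> convex (@leT (e + j)) (stage C (e + j)) (C (e + j))) ->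
  chain (@leT (d + j)) (stage C (d + j)) A -> chain (@leT j) (stage C j) (trunc d j @: A).
Proof.
elim: d A => [|d IH] A convexC chA; first by rewrite imset_trunc0.
rewrite imset_truncS; apply: IH => [e lt_ed|]; first exact/convexC/ltnW.
exact: (doubling_fst_chain (convexC d (ltnSn d)) chA).
Qed.

Lemma trunc_maxchain d j F :
  (forall e, e < d -> convex (@leT (e + j)) (stage C (e + j)) (C (e + j))) ->
  maxchain (@leT (d + j)) (stage C (d + j)) F ->
  maxchain (@leT j) (stage C j) (trunc d j @: F).
Proof.
elim: d F => [|d IH] F convexC Fmax; first by rewrite imset_trunc0.
rewrite imset_truncS; apply: IH => [e lt_ed|]; first exact/convexC/ltnW.
exact: (doubling_fst_maxchain (@leT_refl _) (@leT_trans _) (convexC d (ltnSn d)) Fmax).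
Qed.

Lemma trunc_lift d j B : chain (@leT j) (stage C j) B ->
  exists2 A, chain (@leT (d + j)) (stage C (d + j)) A & trunc d j @: A = B.
Proof.
elim: d => [|d IH] chB; first by exists B; rewrite ?imset_trunc0.
have [A chA <-] := IH chB.
have [A' chA' <-] := doubling_lift_chain (@leT_trans _) (C (d + j)) chA.
by exists A'; rewrite ?imset_truncS.
Qed.

End Tower.

Section Projection.
Variables (C : forall i : nat, {set Ty i}) (d i : nat).
Hypothesis C_convex : forall j, j < d + i.+1 -> convex (@leT j) (stage C j) (C j).

Definition proj (x : Ty (d + i.+1)) : Ty i := (trunc d i.+1 x).1.

Let C_convex_above e :
  e < d -> convex (@leT (e + i.+1)) (stage C (e + i.+1)) (C (e + i.+1)).
Proof. by move=> lt_ed; apply: C_convex; rewrite ltn_add2r. Qed.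

Let C_convex_at : convex (@leT i) (stage C i) (C i).
Proof. exact/C_convex/leq_addl. Qed.

Lemma imset_proj (A : {set Ty (d + i.+1)}) : proj @: A = fst @: (trunc d i.+1 @: A).
Proof. by rewrite -imset_comp. Qed.

Lemma proj_chain A : chain (@leT (d + i.+1)) (stage C (d + i.+1)) A ->
  chain (@leT i) (stage C i) (proj @: A).
Proof.
move=> chA; rewrite imset_proj.
exact: (doubling_fst_chain C_convex_at (trunc_chain C_convex_above chA)).
Qed.

Lemma proj_maxchain F : maxchain (@leT (d + i.+1)) (stage C (d + i.+1)) F ->
  maxchain (@leT i) (stage C i) (proj @: F).
Proof.
move=> Fmax; rewrite imset_proj.
exact: (doubling_fst_maxchain (@leT_refl _) (@leT_trans _) C_convex_at
          (trunc_maxchain C_convex_above Fmax)).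
Qed.

Lemma proj_lift B : chain (@leT i) (stage C i) B ->
  exists2 A, chain (@leT (d + i.+1)) (stage C (d + i.+1)) A & proj @: A = B.
Proof.
move=> chB; have [B' chB' <-] := doubling_lift_chain (@leT_trans _) (C i) chB.
by have [A chA <-] := @trunc_lift C d i.+1 _ chB'; exists A; rewrite ?imset_proj.
Qed.

Lemma proj_vertical F : maxchain (@leT (d + i.+1)) (stage C (d + i.+1)) F ->
  (exists2 x, x \in F & proj x \in C i) ->
  exists y z, [/\ y != z, y \in F, z \in F, proj y \in C i & proj z \in C i].
Proof.
move=> Fmax [x xF pxC].
have meetsC : exists2 u, u \in trunc d i.+1 @: F & u.1 \in C i.
  by exists (trunc d i.+1 x); rewrite ?imset_f.
have [c [cC /imsetP[y yF ey] /imsetP[z zF ez]]] :=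
  maxchain_doubling_vertical (@leT_refl _) (@leT_trans _) C_convex_at
    (trunc_maxchain C_convex_above Fmax) meetsC.
exists y, z; split=> //; rewrite /proj -?ey -?ez //.
by apply/eqP => yz; move: ey; rewrite yz -ez.
Qed.

End Projection.
Arguments proj {d i} x.

Theorem theorem3p24 (n : nat) (C : forall i : nat, {set Ty i}) :
  (forall i, i < n -> C i != set0 /\ convex (@leT i) (stage C i) (C i)) ->
  shellable (@leT n) (stage C n) ->
  forall i, i < n -> exists x, x \in C i /\ spine (@leT i) (stage C i) x.
Proof.
move=> hC [Fs shellFs] i lt_in.
have [d def_n] : exists d, n = d + i.+1 by exists (n - i.+1); rewrite subnK.
subst n; have C_convex j (lt_jn : j < d + i.+1) := (hC j lt_jn).2.
have /set0Pn[c cC] := (hC i lt_in).1.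
have [F Fmax Fmaxlen] :=
  ex_maxchain_image_maxlen (proj_chain C_convex) (@proj_lift C d i).
have F0_maxlen := shelling_first_facet shellFs
  (maxlen_image_adjacency_closed (proj_chain C_convex) (proj_maxchain C_convex))
  Fmax Fmaxlen.
have [F' F'max F'C] := ex_maxchain_meeting (@proj_lift C d i) (@leT_refl i) cC
  (subsetP (C_convex i lt_in).1 _ cC).
have [x xF0 pxC] := shelling_first_facet shellFs
  (meets_adjacency_closed (proj_vertical C_convex)) F'max F'C.
by exists (proj x); split=> //; exists (proj @: nth set0 Fs 0); rewrite ?imset_f.
Qed.
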